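(* Let $k\ge 1$, and let $E_k$, $\oplus$, $\mathcal A_k$ be as in the context. Then: (i) $(E_k,\oplus,\emptyset,\Gamma^k)$ is an effect algebra, and every element of $\mathcal A_k$ belongs to $E_k$. (ii) For every state $\rho$ on $E_k$, the function $P_\rho(\alpha_1\dots\alpha_k\mid a_1\dots a_k)=\rho\big([a_1\alpha_1]\times\cdots\times[a_k\alpha_k]\big)$ is a PR-state (in particular it satisfies the no-signaling condition). Conversely, for every PR-state $P$ there is a unique state $\rho_P$ on $E_k$ with $\rho_P\big([a_1\alpha_1]\times\cdots\times[a_k\alpha_k]\big)=P(\alpha_1\dots\alpha_k\mid a_1\dots a_k)$ for all inputs and outputs; it is given by $\rho_P(q_1\cup\dots\cup q_n)=\sum_{i=1}^n\rho_P(q_i)$ for any decomposition of an element of $E_k$ into pairwise disjoint $q_i\in\mathcal A_k$, and this value does not depend on the chosen decomposition. Hence $\rho\mapsto P_\rho$ is a bijection between the set of states on $E_k$ and the set of PR-states of the $k$-box model.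
   Context: Fix an integer $N\ge1$ (number of inputs) and nonempty finite sets $\mathcal U_1,\dots,\mathcal U_N$ ($\mathcal U_a$ is the set of outputs for input $a$). Put $\Gamma=\mathcal U_1\times\cdots\times\mathcal U_N$. For $a\in\{1,\dots,N\}$ and $\mathcal A\subseteq\mathcal U_a$ let $[a\in\mathcal A]=\{\gamma\in\Gamma:\gamma_a\in\mathcal A\}$ and $[a\alpha]=[a\in\{\alpha\}]$. For $k\ge1$ let $\mathcal A_k=\{[a_1\alpha_1]\times\cdots\times[a_k\alpha_k]\subseteq\Gamma^k : a_i\in\{1,\dots,N\},\ \alpha_i\in\mathcal U_{a_i}\}$. Call a subset of $\Gamma^k$ decomposable if it is a union of pairwise disjoint members of $\mathcal A_k$ (the empty union, giving $\emptyset$, is allowed). Let $E_k$ be the family of all $p\subseteq\Gamma^k$ such that both $p$ and $\Gamma^k\setminus p$ are decomposable. For $p,q\in E_k$, $p\oplus q$ is defined iff $p\cap q=\emptyset$ and $\Gamma^k\setminus(p\cup q)$ is decomposable, and then $p\oplus q=p\cup q$. An effect algebra is a set $E$ with a partial binary operation $\oplus$ and elements $0,1$ such that: (E1) if $p\oplus q$ is defined then $q\oplus p$ is defined and equal; (E2) if $q\oplus r$ and $p\oplus(q\oplus r)$ are defined then $p\oplus q$ and $(p\oplus q)\oplus r$ are defined and $p\oplus(q\oplus r)=(p\oplus q)\oplus r$; (E3) for each $p$ there is a unique $q$ with $p\oplus q=1$; (E4) if $p\oplus1$ is defined then $p=0$. A state on an effect algebra is a map $\rho:E\to[0,1]$ with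 $\rho(1)=1$ and $\rho(p_1\oplus\dots\oplus p_n)=\sum_i\rho(p_i)$ whenever the left side is defined. A PR-state of the $k$-box model is a function $P(\alpha_1\dots\alpha_k\mid a_1\dots a_k)\ge0$, defined for $a_i\in\{1,\dots,N\}$, $\alpha_i\in\mathcal U_{a_i}$, such that for each input tuple $\sum_{\alpha_1,\dots,\alpha_k}P(\alpha_1\dots\alpha_k\mid a_1\dots a_k)=1$, and satisfying no-signaling: for every $i$, every $a_1,\dots,a_k$, every $b_i$ and every fixed $\alpha_j$ ($j\ne i$), $\sum_{\alpha_i\in\mathcal U_{a_i}}P(\alpha_1\dots\alpha_i\dots\alpha_k\mid a_1\dots a_i\dots a_k)=\sum_{\beta_i\in\mathcal U_{b_i}}P(\alpha_1\dots\beta_i\dots\alpha_k\mid a_1\dots b_i\dots a_k)$. *)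

From HB Require Import structures.
From mathcomp Require Import all_boot all_order all_algebra.
Set Implicit Arguments. Unset Strict Implicit. Unset Printing Implicit Defensive.
Import Order.TTheory GRing.Theory Num.Theory.

(* An effect algebra carried by the subset [E] of a type [T]; [D p q] says
   that [p (+) q] is defined, in which case its value is [op p q]. *)
Definition is_effect_algebra (T : Type) (E : T -> Prop) (D : T -> T -> Prop)
  (op : T -> T -> T) (zero one : T) : Prop :=
  E zero /\ E one /\
      (forall p q, E p -> E q -> D p q -> E (op p q)) /\
      (forall p q, E p -> E q -> D p q -> D q p /\ op p q = op q p) /\
      (forall p q r, E p -> E q -> E r -> D q r -> D p (op q r) ->
         [/\ D p q, D (op p q) r & op p (op q r) = op (op p q) r]) /\
      (forall p, E p -> exists q, [/\ E q, D p q, op p q = one &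
         forall q', E q' -> D p q' -> op p q' = one -> q' = q]) /\
      (forall p, E p -> D p one -> p = zero).

(* [osum E D op s r] : the sum p_1 (+) ... (+) p_n of the nonempty list
   s = [p_1;...;p_n] is defined (bracketed from the left) and equals r. *)
Inductive osum (T : Type) (E : T -> Prop) (D : T -> T -> Prop)
    (op : T -> T -> T) : seq T -> T -> Prop :=
| osum1 p : E p -> osum E D op [:: p] p
| osumS s r q : osum E D op s r -> E q -> D r q ->
    osum E D op (rcons s q) (op r q).

Local Open Scope ring_scope.

Definition is_state (R : realFieldType) (T : Type) (E : T -> Prop)
  (D : T -> T -> Prop) (op : T -> T -> T) (one : T) (rho : T -> R) : Prop :=
  [/\ (forall p, E p -> 0 <= rho p <= 1), rho one = 1 &
      (forall s r, osum E D op s r -> rho r = \sum_(p <- s) rho p)].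

(* N inputs; U a = set of outputs of input a. *)
Definition Gam (N : nat) (U : 'I_N -> finType) : finType :=
  {dffun forall a : 'I_N, U a}.

(* labels (a_1 alpha_1, ..., a_k alpha_k) of the members of A_k *)
Definition Lab (N : nat) (U : 'I_N -> finType) (k : nat) : finType :=
  {ffun 'I_k -> {a : 'I_N & U a}}.

Definition Gk (N : nat) (U : 'I_N -> finType) (k : nat) : finType :=
  {ffun 'I_k -> Gam U}.

(* [a_1 alpha_1] x ... x [a_k alpha_k] *)
Definition atom (N : nat) (U : 'I_N -> finType) (k : nat) (s : Lab U k)
  : {set Gk U k} :=
  [set g : Gk U k | [forall i : 'I_k, g i (tag (s i)) == tagged (s i)]].

Definition Ak (N : nat) (U : 'I_N -> finType) (k : nat) : {set {set Gk U k}} :=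
  [set atom s | s : Lab U k].

Definition decomposable (N : nat) (U : 'I_N -> finType) (k : nat)
  (p : {set Gk U k}) : Prop :=
  exists F : {set {set Gk U k}},
    [/\ F \subset Ak U k, trivIset F & cover F = p].

Definition Ek (N : nat) (U : 'I_N -> finType) (k : nat) (p : {set Gk U k}) : Prop :=
  decomposable p /\ decomposable (~: p).

Definition Edef (N : nat) (U : 'I_N -> finType) (k : nat)
  (p q : {set Gk U k}) : Prop :=
  p :&: q = set0 /\ decomposable (~: (p :|: q)).

Definition Eop (N : nat) (U : 'I_N -> finType) (k : nat)
  (p q : {set Gk U k}) : {set Gk U k} := p :|: q.

Definition Ek_state (R : realFieldType) (N : nat) (U : 'I_N -> finType) (k : nat)
  (rho : {set Gk U k} -> R) : Prop :=
  is_state (@Ek N U k) (@Edef N U k) (@Eop N U k) setT rho.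

(* PR-states: P s = P(alpha_1..alpha_k | a_1..a_k) where s i = (a_i, alpha_i) *)
Definition PR_state (R : realFieldType) (N : nat) (U : 'I_N -> finType) (k : nat)
  (P : Lab U k -> R) : Prop :=
  [/\ (forall s, 0 <= P s),
      (forall a : 'I_k -> 'I_N,
         \sum_(s : Lab U k | [forall i, tag (s i) == a i]) P s = 1) &
      (* no-signaling: fix i, a_j and alpha_j (j != i), a_i (from s), and b_i *)
      (forall (i : 'I_k) (s : Lab U k) (b : 'I_N),
         \sum_(t : Lab U k | [forall j, (j != i) ==> (t j == s j)]
                             && (tag (t i) == tag (s i))) P t
       = \sum_(t : Lab U k | [forall j, (j != i) ==> (t j == s j)]
                             && (tag (t i) == b)) P t)].

(* A set depending only on the outputs [g i (a i)] for one fixed choice of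
   inputs [a] is a disjoint union of atoms; this yields the decomposable
   complements required by the effect-algebra axioms, and lets a state be
   evaluated through any decomposition into atoms. So states are determined by
   their values on atoms, and covering [Gamma^k] (resp. the set fixing all
   outputs but the [i]-th) by the atoms with given inputs gives normalisation
   (resp. no-signaling).
   Conversely a PR-state [P] is the family of atom masses of a signed measure
   on [Gamma^k]: for one box, a function on labels with equal input marginals
   is reproduced by an explicit kernel into signed measures on [Gamma], and for
   [k] boxes the tensor product of these kernels is used, the no-signaling
   condition being spent once per box. The resulting set function is additive,
   and nonnegative on decomposable sets, hence a state. *)

From HB Require Import structures.
From mathcomp Require Import all_boot all_order all_algebra.
Set Implicit Arguments. Unset Strict Implicit. Unset Printing Implicit Defensive.
Import Order.TTheory GRing.Theory Num.Theory.
Local Open Scope ring_scope.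

Section EffectAlgebra.
Variables (N : nat) (U : 'I_N -> finType) (k : nat).
Implicit Types (a : 'I_k -> 'I_N) (g h : Gk U k) (t s : Lab U k) (p q r : {set Gk U k}).

Definition label_at a g : Lab U k := [ffun i => Tagged (fun x => U x) (g i (a i))].

Lemma in_atom t g : (g \in atom t) = [forall i, g i (tag (t i)) == tagged (t i)].
Proof. by rewrite inE. Qed.

Lemma tag_label_at a g i : tag (label_at a g i) = a i.
Proof. by rewrite ffunE. Qed.

Lemma atom_label_at a g : g \in atom (label_at a g).
Proof. by rewrite in_atom; apply/forallP => i; rewrite ffunE. Qed.

Lemma in_atomE a t g :
  (forall i, tag (t i) = a i) -> (g \in atom t) = (t == label_at a g).
Proof.
move=> tag_t; rewrite in_atom; apply/forallP/eqP => [g_t|->]; last first.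
  by move=> i; rewrite ffunE.
apply/ffunP => i; rewrite ffunE -tag_t.
by have := g_t i; case: (t i) => b x /= /eqP ->.
Qed.

Lemma atom_inputs_inj t t' g :
  (forall i, tag (t i) = tag (t' i)) -> g \in atom t -> g \in atom t' -> t = t'.
Proof.
move=> tag_tt'; rewrite (@in_atomE (fun i => tag (t i))) // => /eqP ->.
by rewrite (@in_atomE (fun i => tag (t i))) // => /eqP.
Qed.

Lemma sum_atoms_inputs (V : nmodType) (c : Gk U k -> V) a :
  \sum_g c g = \sum_(t : Lab U k | [forall i, tag (t i) == a i]) \sum_(g in atom t) c g.
Proof.
transitivity (\sum_g \sum_(t : Lab U k | [forall i, tag (t i) == a i])
                 if g \in atom t then c g else 0).
  apply: eq_bigr => g _; rewrite -big_mkcondr /= (big_pred1 (label_at a g)) // => t.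
  apply/andP/eqP => [[/forallP t_a]|->]; last first.
    by rewrite atom_label_at; split=> //; apply/forallP => i; rewrite tag_label_at.
  by rewrite (in_atomE _ (fun i => eqP (t_a i))) => /eqP.
by rewrite exchange_big /=; apply: eq_bigr => t _; rewrite [RHS]big_mkcond.
Qed.

Lemma decomposable_inputs a p :
  (forall g h, (forall i, g i (a i) = h i (a i)) -> g \in p -> h \in p) ->
  decomposable p.
Proof.
move=> p_inv; exists [set atom (label_at a g) | g in p]; split.
- by apply/subsetP => _ /imsetP [g _ ->]; apply: imset_f.
- apply/trivIsetP => _ _ /imsetP [g _ ->] /imsetP [h _ ->] neq.
  rewrite -setI_eq0; apply/set0Pn => -[x /setIP [xg xh]]; case/eqP: neq.
  by congr atom; apply: atom_inputs_inj xg xh => i; rewrite !tag_label_at.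
apply/setP => x; apply/bigcupP/idP => [[_ /imsetP [g gp ->]]|xp].
  rewrite (in_atomE _ (tag_label_at a g)) => /eqP gx; apply: p_inv gp => i.
  by have := congr1 (fun t : Lab U k => t i) gx; rewrite !ffunE; apply: eq_from_Tagged.
by exists (atom (label_at a x)); [apply: imset_f | apply: atom_label_at].
Qed.

Lemma decomposable0 : decomposable (set0 : {set Gk U k}).
Proof.
exists set0; split; first exact: sub0set.
  by apply/trivIsetP => A B; rewrite inE.
by rewrite /cover big_set0.
Qed.

Lemma decomposableU p q :
  p :&: q = set0 -> decomposable p -> decomposable q -> decomposable (p :|: q).
Proof.
move=> pq [F [FA tF eF]] [G [GA tG eG]]; subst p q; exists (F :|: G); split.
- by rewrite subUset FA GA.
- by apply: trivIsetU => //; rewrite -setI_eq0 pq.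
- by rewrite /cover bigcup_setU.
Qed.

Lemma decomposableT : (0 < N)%N -> decomposable [set: Gk U k].
Proof. by move=> N_gt0; apply: (@decomposable_inputs (fun _ => Ordinal N_gt0)). Qed.

Lemma decomposableCU p q :
  p :&: q = set0 -> decomposable q -> decomposable (~: (p :|: q)) ->
  decomposable (~: p).
Proof.
move=> pq dq dpq; have -> : ~: p = ~: (p :|: q) :|: q.
  apply/setP => x; move/setP/(_ x): pq; rewrite !inE.
  by case: (x \in p); case: (x \in q).
by apply: decomposableU => //; rewrite setCU -setIA [~: q :&: _]setIC setICr setI0.
Qed.

Lemma Ek_atom t : Ek (atom t).
Proof.
split.
  exists [set atom t]; rewrite sub1set imset_f // cover1; split=> //.
  exact: trivIset1.
apply: (@decomposable_inputs (fun i => tag (t i))) => g h gh.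
by rewrite !inE; apply: contra => /forallP g_t; apply/forallP => i; rewrite gh.
Qed.

Lemma Ek_Ak A : A \in Ak U k -> Ek A.
Proof. by case/imsetP => t _ ->; apply: Ek_atom. Qed.

Hypothesis N_gt0 : (0 < N)%N.

Lemma Ek0 : Ek (set0 : {set Gk U k}).
Proof. by split; rewrite ?setC0; [apply: decomposable0 | apply: decomposableT]. Qed.

Lemma EkC p : Ek p -> Ek (~: p).
Proof. by case=> dp dCp; split; rewrite ?setCK. Qed.

Lemma Edef_assoc p q r :
  Ek r -> Edef q r -> Edef p (Eop q r) ->
  [/\ Edef p q, Edef (Eop p q) r & Eop p (Eop q r) = Eop (Eop p q) r].
Proof.
rewrite /Edef /Eop => -[dr _] [qr _] [pqr dpqr].
move/eqP: pqr; rewrite setIUr setU_eq0 => /andP [/eqP pq /eqP pr].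
have pq_r : (p :|: q) :&: r = set0 by rewrite setIUl pr qr setU0.
rewrite -setUA; split=> //; split=> //.
by apply: decomposableCU pq_r dr _; rewrite -setUA.
Qed.

Lemma Ek_effect_algebra : is_effect_algebra (@Ek N U k) (@Edef N U k) (@Eop N U k) set0 setT.
Proof.
split; first exact: Ek0.
split; first by rewrite -setC0; apply/EkC/Ek0.
split; first by move=> p q [dp _] [dq _] [pq dpq]; split=> //; apply: decomposableU.
split; first by move=> p q _ _; rewrite /Edef /Eop setIC setUC.
split; first by move=> p q r _ _ Er; apply: Edef_assoc.
split; last by move=> p _ [pT _]; rewrite setIT in pT.
move=> p Ep; exists (~: p); split; first exact: EkC.
- by rewrite /Edef /Eop setICr setUCr setCT; split=> //; apply: decomposable0.
- by rewrite /Eop setUCr.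
move=> q _ [pq _] pqT; apply/setP => x.
move/setP/(_ x): pq; move/setP/(_ x): pqT; rewrite !inE.
by case: (x \in p); case: (x \in q).
Qed.

End EffectAlgebra.

Section States.
Variables (R : realFieldType) (N : nat) (U : 'I_N -> finType) (k : nat).
Hypothesis N_gt0 : (0 < N)%N.
Variable rho : {set Gk U k} -> R.
Hypothesis rho_state : Ek_state rho.

Lemma state_set0 : rho set0 = 0.
Proof.
have osum00 : osum (@Ek N U k) (@Edef N U k) (@Eop N U k) [:: set0; set0] set0.
  rewrite -[X in osum _ _ _ _ X](setU0 set0); apply: (osumS (s := [:: set0])).
  - exact/osum1/Ek0.
  - exact: Ek0.
  by split; rewrite ?setI0 // setU0 setC0; apply: decomposableT.
case: rho_state => _ _ /(_ _ _ osum00).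
by rewrite big_cons big_seq1 => e; apply: (addrI (rho set0)); rewrite addr0 -e.
Qed.

Lemma osum_bigcup (s : seq {set Gk U k}) :
  uniq s -> {in s, forall A, Ek A} ->
  {in s &, forall A B, A != B -> A :&: B = set0} ->
  decomposable (~: \bigcup_(A <- s) A) ->
  osum (@Ek N U k) (@Edef N U k) (@Eop N U k) (set0 :: s) (\bigcup_(A <- s) A).
Proof.
elim/last_ind: s => [|s q IH]; first by rewrite big_nil => *; apply/osum1/Ek0.
rewrite rcons_uniq big_rcons /= => /andP [q_s uniq_s] Es disj d.
have sub_s : {subset s <= rcons s q} by move=> A; rewrite mem_rcons inE orbC => ->.
have q_in : q \in rcons s q by rewrite mem_rcons mem_head.
have s_q : \bigcup_(A <- s) A :&: q = set0.
  apply/eqP; rewrite setIC setI_eq0 bigcup_seq; apply: bigcup_disjoint => A As.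
  rewrite -setI_eq0 setIC; apply/eqP/disj; [exact: sub_s | exact: q_in |].
  by apply: contraNneq q_s => <-.
have [dq _] := Es q q_in.
rewrite -rcons_cons [_ :|: _]/(Eop _ _).
apply: osumS; [apply: IH => // | exact: Es | by split].
- by move=> A /sub_s /Es.
- by move=> A B /sub_s As /sub_s Bs; apply: disj.
- exact: decomposableCU s_q dq d.
Qed.

Lemma state_cover (F : {set {set Gk U k}}) :
  {in F, forall A, Ek A} -> trivIset F -> decomposable (~: cover F) ->
  rho (cover F) = \sum_(A in F) rho A.
Proof.
move=> EF tF dF; have coverE : cover F = \bigcup_(A <- enum F) A.
  by rewrite /cover big_enum.
have [_ _ rho_osum] := rho_state.
rewrite coverE (rho_osum _ _ (osum_bigcup _ _ _ _)) ?enum_uniq -?coverE //.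
- by rewrite big_cons state_set0 add0r big_enum.
- by move=> A; rewrite mem_enum; apply: EF.
by move=> A B; rewrite !mem_enum => AF BF /(trivIsetP tF _ _ AF BF); rewrite -setI_eq0 => /eqP.
Qed.

Lemma state_decomposition p (F : {set {set Gk U k}}) :
  Ek p -> F \subset Ak U k -> trivIset F -> cover F = p ->
  rho p = \sum_(A in F) rho A.
Proof.
move=> [_ dCp] FA tF Fp; rewrite -Fp state_cover ?Fp //.
by move=> A /(subsetP FA); apply: Ek_Ak.
Qed.

End States.

Section StateToPR.
Variables (R : realFieldType) (N : nat) (U : 'I_N -> finType) (k : nat).
Hypothesis N_gt0 : (0 < N)%N.
Variable out : forall a, U a.
Implicit Types (t s : Lab U k) (a : 'I_k -> 'I_N) (rho : {set Gk U k} -> R).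

Lemma atom_nonempty t : exists g, g \in atom t.
Proof.
exists [ffun i => finfun (dfwith out (tagged (t i)))].
by rewrite in_atom; apply/forallP => i; rewrite !ffunE dfwith_in.
Qed.

Lemma state_bigcup_atoms rho a (C : pred (Lab U k)) :
  Ek_state rho -> (forall t, C t -> forall i, tag (t i) = a i) ->
  decomposable (~: \bigcup_(t | C t) atom t) ->
  rho (\bigcup_(t | C t) atom t) = \sum_(t | C t) rho (atom t).
Proof.
move=> rho_state C_a dC.
have same_inputs t t' : C t -> C t' -> forall i, tag (t i) = tag (t' i).
  by move=> Ct Ct' i; rewrite !C_a.
have atom_inj : {in C &, injective (@atom N U k)}.
  move=> t t' Ct Ct' tt'; have [g gt] := atom_nonempty t.
  by apply: (atom_inputs_inj (same_inputs _ _ Ct Ct') gt); rewrite -tt'.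
rewrite -cover_imset state_cover ?cover_imset ?big_imset //.
  by move=> _ /imsetP [t _ ->]; apply: Ek_atom.
apply/trivIsetP => _ _ /imsetP [t Ct ->] /imsetP [t' Ct' ->] tt'.
rewrite -setI_eq0; apply/set0Pn => -[g /setIP [gt gt']]; case/eqP: tt'.
by congr atom; apply: atom_inputs_inj gt gt'; apply: same_inputs.
Qed.

Lemma bigcup_atoms_inputs a :
  \bigcup_(t : Lab U k | [forall i, tag (t i) == a i]) atom t = [set: Gk U k].
Proof.
apply/setP => g; rewrite inE; apply/bigcupP; exists (label_at a g).
  by apply/forallP => i; rewrite tag_label_at.
exact: atom_label_at.
Qed.

Definition agree_off i s : {set Gk U k} :=
  [set g : Gk U k | [forall j, (j != i) ==> (g j (tag (s j)) == tagged (s j))]].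

Lemma bigcup_atoms_agree_off i s b :
  \bigcup_(t : Lab U k | [forall j, (j != i) ==> (t j == s j)] && (tag (t i) == b)) atom t
  = agree_off i s.
Proof.
apply/setP => g; rewrite inE; apply/bigcupP/forallP.
  move=> [t /andP [/forallP t_s _]]; rewrite in_atom => /forallP g_t j.
  by apply/implyP => ji; have := g_t j; rewrite (eqP (implyP (t_s j) ji)).
move=> g_s; exists [ffun j => if j == i then Tagged (fun x => U x) (g i b) else s j].
  rewrite ffunE eqxx /= eqxx andbT.
  by apply/forallP => j; apply/implyP => /negbTE ji; rewrite ffunE ji.
rewrite in_atom; apply/forallP => j; rewrite ffunE.
by case: (eqVneq j i) => [->|ji] //; apply: (implyP (g_s j) ji).
Qed.

Lemma state_PR_state rho : Ek_state rho -> PR_state (fun s => rho (atom s)).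
Proof.
move=> rho_state; have [rho_01 _ _] := rho_state; split.
- by move=> s; have /andP [] := rho_01 _ (Ek_atom s).
- move=> a; rewrite -(state_bigcup_atoms (a := a) rho_state).
  + by rewrite bigcup_atoms_inputs; case: rho_state.
  + by move=> t /forallP t_a i; apply/eqP.
  + by rewrite bigcup_atoms_inputs setCT; apply: decomposable0.
move=> i s b.
pose inputs b' j := if j == i then b' else tag (s j).
have C_inputs b' t : [forall j, (j != i) ==> (t j == s j)] && (tag (t i) == b') ->
    forall j, tag (t j) = inputs b' j.
  case/andP => /forallP t_s /eqP ti j; rewrite /inputs.
  by case: (eqVneq j i) => [->|ji] //; rewrite (eqP (implyP (t_s j) ji)).
have dC : decomposable (~: agree_off i s).
  apply: (@decomposable_inputs _ _ _ (fun j => tag (s j))) => g h gh.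
  by rewrite !inE; apply: contra => /forallP g_s; apply/forallP => j; rewrite gh.
rewrite -!(state_bigcup_atoms rho_state (C_inputs _)) ?bigcup_atoms_agree_off //.
Qed.

End StateToPR.

Lemma sum_mul_eq (R : pzSemiRingType) (T : finType) (F : T -> R) v :
  \sum_x F x * (x == v)%:R = F v.
Proof. by rewrite (bigD1 v) //= eqxx mulr1 big1 ?addr0 // => x /negbTE ->; rewrite mulr0. Qed.

Section OneBox.
Variables (R : realFieldType) (N : nat) (U : 'I_N -> finType).
Variables (om : Gam U) (a0 : 'I_N).
Local Notation label := {x : 'I_N & U x}.
Implicit Types (l : label) (gam : Gam U).

Definition om_with l : Gam U := finfun (dfwith om (tagged l)).

(* For [f] with all input marginals equal to [m], [sum_l f l * kernel _ l] is
   [f l] at [om_with l] minus [(N - 1) m] at [om]: the labels with input other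
   than [a] put mass [(N - 1) m] on [[a alpha]] exactly when [om a = alpha], and
   the correction at [om] cancels it (see [kernel_marginal_id]). *)
Definition kernel gam l : R :=
  (gam == om_with l)%:R - (N.-1)%:R * ((tag l == a0) && (gam == om))%:R.

Definition kernel_marginal l' l : R :=
  (om_with l (tag l') == tagged l')%:R
  - (N.-1)%:R * ((tag l == a0) && (om (tag l') == tagged l'))%:R.

Lemma sum_kernel_atom l' l :
  \sum_(gam : Gam U) (gam (tag l') == tagged l')%:R * kernel gam l = kernel_marginal l' l.
Proof.
rewrite /kernel /kernel_marginal; under eq_bigr do rewrite mulrBr.
rewrite sumrB sum_mul_eq; congr (_ - _).
case: (tag l == a0) => /=; last by rewrite mulr0 big1 // => *; rewrite !mulr0.
by under eq_bigr do rewrite mulrCA; rewrite -big_distrr sum_mul_eq.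
Qed.

Lemma om_with_same l l' : tag l = tag l' ->
  (om_with l (tag l') == tagged l') = (l == l').
Proof.
case: l' => a' y; case: l => a x /= e; subst a'.
by rewrite ffunE dfwith_in eq_sym eq_Tagged /= eq_sym.
Qed.

Lemma om_with_other l l' : tag l != tag l' -> om_with l (tag l') = om (tag l').
Proof. by move=> ne; rewrite ffunE dfwith_out. Qed.

Lemma kernel_marginal_id (f : label -> R) m l' :
  (forall a, \sum_(l | tag l == a) f l = m) ->
  \sum_l kernel_marginal l' l * f l = f l'.
Proof.
move=> f_m; rewrite /kernel_marginal; under eq_bigr do rewrite mulrBl.
rewrite sumrB (bigID (fun l => tag l == tag l')) /=.
have same_input : \sum_(l | tag l == tag l') (om_with l (tag l') == tagged l')%:R * f l = f l'.
  rewrite (bigD1 l') //= om_with_same // eqxx mul1r big1 ?addr0 // => l /andP [/eqP tl ne].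
  by rewrite om_with_same // (negbTE ne) mul0r.
have other_inputs : \sum_(l | tag l != tag l') (om_with l (tag l') == tagged l')%:R * f l
    = (om (tag l') == tagged l')%:R * ((N.-1)%:R * m).
  under eq_bigr => l ne do rewrite om_with_other //.
  rewrite -big_distrr /= (partition_big (fun l => tag l) (fun a => a != tag l')) //=.
  under eq_bigr => a ne.
    rewrite (eq_bigl (fun l => tag l == a)) ?f_m; last first.
      by move=> l; case: eqP => // ->; rewrite eq_sym (negbTE ne).
  over.
  by congr (_ * _); rewrite sumr_const cardC1 card_ord mulr_natl.
have base_input : \sum_l (N.-1)%:R * ((tag l == a0) && (om (tag l') == tagged l'))%:R * f l
    = (N.-1)%:R * ((om (tag l') == tagged l')%:R * m).
  rewrite -(f_m a0) !big_distrr /= [RHS]big_mkcond /=; apply: eq_bigr => l _.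
  by case: (tag l == a0); rewrite /= ?mulr0 ?mul0r ?mulrA.
by rewrite same_input other_inputs base_input mulrCA addrK.
Qed.

End OneBox.

Lemma prod_nat_forall (R : comPzSemiRingType) (I : finType) (b : pred I) :
  \prod_i (b i)%:R = [forall i, b i]%:R :> R.
Proof.
case: (boolP [forall i, b i]) => [/forallP b_all|/forallPn [i /negbTE bi]].
  by rewrite big1 // => i _; rewrite b_all.
by rewrite (bigD1 i) //= bi mul0r.
Qed.

Lemma prod_ord_ltS (R : comPzSemiRingType) k n (n_lt_k : (n < k)%N) (F : 'I_k -> R) :
  \prod_(j : 'I_k | (j < n.+1)%N) F j
  = F (Ordinal n_lt_k) * \prod_(j : 'I_k | (j < n)%N) F j.
Proof.
rewrite (bigD1 (Ordinal n_lt_k)) //=; congr (_ * _); apply: eq_bigl => j.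
rewrite ltnS leq_eqVlt; case: (eqVneq j (Ordinal n_lt_k)) => [->|ji].
  by rewrite andbF /= ltnn.
by rewrite andbT orb_idl // => /eqP jn; case/eqP: ji; apply: val_inj.
Qed.

Section ManyBoxes.
Variables (R : realFieldType) (N : nat) (U : 'I_N -> finType) (k : nat).
Variables (om : Gam U) (a0 : 'I_N) (P : Lab U k -> R).
Hypothesis P_PR : PR_state P.
Local Notation label := {x : 'I_N & U x}.
Local Notation M := (kernel_marginal R om a0).
Implicit Types (t s : Lab U k) (i : 'I_k) (u : label).

Definition relabel t i u : Lab U k := [ffun j => if j == i then u else t j].

Lemma relabel_id t i : relabel t i (t i) = t.
Proof. by apply/ffunP => j; rewrite ffunE; case: eqP => // ->. Qed.

Lemma sum_agree_offE (F : Lab U k -> R) t i a :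
  \sum_(s : Lab U k | [forall j, (j != i) ==> (s j == t j)] && (tag (s i) == a)) F s
  = \sum_(u | tag u == a) F (relabel t i u).
Proof.
rewrite (partition_big (fun s : Lab U k => s i) (fun u => tag u == a)); last first.
  by move=> s /andP [].
apply: eq_bigr => u ua; rewrite (big_pred1 (relabel t i u)) // => s.
apply/andP/eqP => [[/andP [/forallP s_t _] /eqP <-]|->].
  by apply/ffunP => j; rewrite ffunE; case: eqP => [->|/eqP ji] //; apply/eqP/(implyP (s_t j)).
rewrite ffunE eqxx ua; split=> //; apply/andP; split=> //.
by apply/forallP => j; apply/implyP => /negbTE ji; rewrite ffunE ji.
Qed.

Lemma PR_relabel_mass t i a :
  \sum_(u | tag u == a) P (relabel t i u) = \sum_(u | tag u == tag (t i)) P (relabel t i u).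
Proof. by case: P_PR => _ _ no_signaling; rewrite -!sum_agree_offE (no_signaling i t a). Qed.

Definition agree_from n s t := [forall j : 'I_k, (n <= j)%N ==> (s j == t j)].

Lemma agree_fromS n (n_lt_k : (n < k)%N) s t u :
  let i := Ordinal n_lt_k in
  agree_from n.+1 s t && (s i == u) = agree_from n s (relabel t i u).
Proof.
move=> i; apply/andP/forallP => [[/forallP s_t /eqP si] j|s_t].
  apply/implyP => nj; rewrite ffunE; case: (eqVneq j i) => [->|ji]; first by rewrite si.
  apply: (implyP (s_t j)); rewrite ltn_neqAle nj andbT.
  by apply: contraNneq ji => nj'; apply/eqP/val_inj; rewrite /= -nj'.
split; last by have := implyP (s_t i) (leqnn n); rewrite ffunE eqxx.
apply/forallP => j; apply/implyP => nj; have := implyP (s_t j) (ltnW nj).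
by rewrite ffunE; case: (eqVneq j i) => [ji|//]; rewrite ji ltnn in nj.
Qed.

Definition marginal_prefix n t : R :=
  \sum_(s | agree_from n s t) (\prod_(i : 'I_k | (i < n)%N) M (t i) (s i)) * P s.

Lemma marginal_prefix0 t : marginal_prefix 0 t = P t.
Proof.
rewrite /marginal_prefix (big_pred1 t) => [|s]; first by rewrite big_pred0 ?mul1r.
apply/forallP/eqP => [s_t|-> j]; last by rewrite eqxx implybT.
by apply/ffunP => j; apply/eqP/(implyP (s_t j)).
Qed.

Lemma marginal_prefixS n (n_lt_k : (n < k)%N) t :
  let i := Ordinal n_lt_k in
  marginal_prefix n.+1 t = \sum_u M (t i) u * marginal_prefix n (relabel t i u).
Proof.
move=> i; rewrite /marginal_prefix (partition_big (fun s : Lab U k => s i) predT) //=.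
apply: eq_bigr => u _; rewrite big_distrr /=; apply: eq_big => [s|s]; first exact: agree_fromS.
case/andP=> _ /eqP si; rewrite prod_ord_ltS si -!mulrA; congr (_ * (_ * _)).
by apply: eq_bigr => j jn; rewrite ffunE ifN //; apply: contraTneq jn => ->; rewrite ltnn.
Qed.

Lemma marginal_prefix_id n : (n <= k)%N -> forall t, marginal_prefix n t = P t.
Proof.
elim: n => [_|n IH n_lt_k] t; first exact: marginal_prefix0.
rewrite marginal_prefixS; under eq_bigr do rewrite IH ?(ltnW n_lt_k) //.
by rewrite (@kernel_marginal_id R N U om a0 _ _ _ (PR_relabel_mass t _)) relabel_id.
Qed.

Lemma sum_prod_kernel_marginal t :
  \sum_(s : Lab U k) (\prod_i M (t i) (s i)) * P s = P t.
Proof.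
rewrite -(marginal_prefix_id (leqnn k)) /marginal_prefix.
apply: eq_big => [s|s _]; first by apply/esym/forallP => j; rewrite leqNgt ltn_ord.
by congr (_ * _); apply: eq_bigl => i; rewrite ltn_ord.
Qed.

End ManyBoxes.

Section DensityState.
Variables (R : realFieldType) (N : nat) (U : 'I_N -> finType) (k : nat).
Variables (om : Gam U) (a0 : 'I_N) (P : Lab U k -> R).
Hypothesis P_PR : PR_state P.
Implicit Types (t : Lab U k) (g : Gk U k) (p : {set Gk U k}).

Definition quasi_density g : R :=
  \sum_(s : Lab U k) (\prod_i kernel R om a0 (g i) (s i)) * P s.

Lemma sum_quasi_density_atom t : \sum_(g in atom t) quasi_density g = P t.
Proof.
rewrite -(sum_prod_kernel_marginal om a0 P_PR t) /quasi_density exchange_big /=.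
apply: eq_bigr => s _; rewrite -big_distrl /=; congr (_ * _).
under [RHS]eq_bigr do rewrite -sum_kernel_atom.
rewrite bigA_distr_bigA /= big_mkcond /=; apply: eq_bigr => g _.
by rewrite big_split /= prod_nat_forall -in_atom; case: (g \in atom t); rewrite ?mul1r ?mul0r.
Qed.

Definition density_state p : R := \sum_(g in p) quasi_density g.

Lemma density_state_cover (F : {set {set Gk U k}}) :
  trivIset F -> density_state (cover F) = \sum_(A in F) density_state A.
Proof. exact: big_trivIset. Qed.

Lemma density_state_ge0 p : decomposable p -> 0 <= density_state p.
Proof.
case=> F [FA tF <-]; rewrite density_state_cover //; apply: sumr_ge0 => A /(subsetP FA).
by case/imsetP => t _ ->; rewrite /density_state sum_quasi_density_atom; case: P_PR.
Qed.

Lemma density_stateU p q :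
  p :&: q = set0 -> density_state (p :|: q) = density_state p + density_state q.
Proof.
move/eqP; rewrite setI_eq0 => pq; rewrite /density_state -bigU //=.
by apply: eq_bigl => g; rewrite !inE.
Qed.

Lemma density_stateT : (0 < N)%N -> density_state [set: Gk U k] = 1.
Proof.
move=> N_gt0; have [_ P_sum _] := P_PR; rewrite -(P_sum (fun _ => Ordinal N_gt0)).
rewrite /density_state big_set /= (sum_atoms_inputs _ (fun _ => Ordinal N_gt0)).
by apply: eq_bigr => t _; apply: sum_quasi_density_atom.
Qed.

Lemma density_state_is_state : (0 < N)%N -> Ek_state density_state.
Proof.
move=> N_gt0; split=> [p [dp dCp] | | s r].
- rewrite density_state_ge0 //= -(density_stateT N_gt0) -(setUCr p).
  by rewrite density_stateU ?setICr // lerDl density_state_ge0.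
- exact: density_stateT.
elim=> [p _|s' r' q _ IH _ [r'q _]]; first by rewrite big_seq1.
by rewrite big_rcons /= -IH density_stateU.
Qed.

End DensityState.

Lemma states_eq_on_atoms (R : realFieldType) N (U : 'I_N -> finType) k
    (rho1 rho2 : {set Gk U k} -> R) :
  (0 < N)%N -> Ek_state rho1 -> Ek_state rho2 ->
  (forall s, rho1 (atom s) = rho2 (atom s)) ->
  forall p, Ek p -> rho1 p = rho2 p.
Proof.
move=> N_gt0 rho1_state rho2_state rho12 p Ep; have [F [FA tF Fp]] := Ep.1.
rewrite (state_decomposition N_gt0 rho1_state Ep FA tF Fp).
rewrite (state_decomposition N_gt0 rho2_state Ep FA tF Fp).
by apply: eq_bigr => A /(subsetP FA) /imsetP [t _ ->].
Qed.

Unset Implicit Arguments.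

Theorem mainTheorem1 (R : realFieldType) (N : nat) (U : 'I_N -> finType)
  (k : nat) (hN : (0 < N)%N) (hU : forall a, (0 < #|U a|)%N) (hk : (0 < k)%N) :
  (is_effect_algebra (@Ek N U k) (@Edef N U k) (@Eop N U k) set0 setT
   /\ (forall A, A \in Ak U k -> Ek A))
  /\
  [/\ (forall rho : {set Gk U k} -> R, Ek_state rho ->
         PR_state (fun s => rho (atom s))),
      (forall P : Lab U k -> R, PR_state P ->
         exists rho : {set Gk U k} -> R,
           [/\ Ek_state rho,
               (forall s, rho (atom s) = P s),
               (forall p (F : {set {set Gk U k}}), Ek p ->
                  F \subset Ak U k -> trivIset F -> cover F = p ->
                  rho p = \sum_(q in F) rho q) &
               (forall rho' : {set Gk U k} -> R, Ek_state rho' ->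
                  (forall s, rho' (atom s) = P s) ->
                  forall p, Ek p -> rho' p = rho p)]) &
      (* injectivity of rho |-> P_rho (states are functions on E_k) *)
      (forall rho1 rho2 : {set Gk U k} -> R, Ek_state rho1 -> Ek_state rho2 ->
         (forall s, rho1 (atom s) = rho2 (atom s)) ->
         forall p, Ek p -> rho1 p = rho2 p)].
Proof.
have out a : U a.
  case: (pickP (@predT (U a))) => [x _|none]; first exact: x.
  by exfalso; move/card_gt0P: (hU a) => [x _]; have := none x.
split; first by split; [exact: Ek_effect_algebra | exact: Ek_Ak].
split=> [rho rho_state | P P_PR | rho1 rho2]; last exact: states_eq_on_atoms hN.
  exact: (state_PR_state hN out rho_state).
have rho_state := density_state_is_state (finfun out) (Ordinal hN) P_PR hN.
have rho_atom := sum_quasi_density_atom (finfun out) (Ordinal hN) P_PR.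
exists (density_state (finfun out) (Ordinal hN) P); split=> //.
- by move=> p F _ _ tF <-; apply: density_state_cover.
- move=> rho' rho'_state rho'_atom; apply: (states_eq_on_atoms hN rho'_state rho_state).
  by move=> s; rewrite rho'_atom; apply/esym/rho_atom.
Qed.
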